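(* Let a compilation chain be given, and let ${\sim}\subseteq \mathit{Trace}_S\times\mathit{Trace}_T$ and a Galois connection $\tau : (2^{\mathit{Trace}_S},\subseteq) \rightleftarrows (2^{\mathit{Trace}_T},\subseteq) : \sigma$ ($\tau$ lower adjoint) correspond to each other, in the sense that $s \sim t \iff t \in \tau(\{s\})$ for all $s,t$ (equivalently, $\tau$ and $\sigma$ are the existential and universal images of $\sim$). Then $\mathit{TP}^{\tau} \iff \mathit{CC}^{\sim} \iff \mathit{TP}^{\sigma}$, where $\mathit{TP}^{\tau} \equiv \forall \pi_S.\ \forall W.\ W \models \pi_S \Rightarrow W{\downarrow}\models \tau(\pi_S)$ and $\mathit{TP}^{\sigma}\equiv \forall \pi_T.\ \forall W.\ W\models\sigma(\pi_T) \Rightarrow W{\downarrow}\models \pi_T$.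
   Context: A compilation chain consists of a set of source (whole) programs $W$, a set of target programs, a set $\mathit{Trace}_S$ of source traces and a set $\mathit{Trace}_T$ of target traces, a source semantics relation $W \rightsquigarrow s$ (program $W$ can produce trace $s$), a target semantics relation of the same kind, and a compiler mapping each source program $W$ to a target program $W{\downarrow}$. A trace property is a set of traces; $W \models \pi$ iff every trace $W$ produces belongs to $\pi$. The existential image of $\sim$ is $\tilde\tau(\pi) = \{t \mid \exists s.\ s\sim t \wedge s\in\pi\}$ and its universal image is $\tilde\sigma(\pi)=\{s\mid \forall t.\ s\sim t\Rightarrow t\in\pi\}$. A Galois connection with lower adjoint $\tau$ means $\tau(\pi_S)\subseteq\pi_T \iff \pi_S\subseteq\sigma(\pi_T)$ for all $\pi_S,\pi_T$. The criterion $\mathit{CC}^{\sim}$ states: for every source program $W$ and every $t\in\mathit{Trace}_T$, if $W{\downarrow}\rightsquigarrow t$ then there exists $s$ with $s\sim t$ and $W\rightsquigarrow s$. *)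

Definition prop (A : Type) := A -> Prop.

Definition subsetP {A : Type} (p q : prop A) : Prop := forall x, p x -> q x.

Definition singleton {A : Type} (a : A) : prop A := fun x => x = a.

Record CompChain := {
  SrcProg : Type;
  TgtProg : Type;
  TraceS : Type;
  TraceT : Type;
  semS : SrcProg -> TraceS -> Prop;
  semT : TgtProg -> TraceT -> Prop;
  compile : SrcProg -> TgtProg
}.

Definition satS (C : CompChain) (W : SrcProg C) (pi : prop (TraceS C)) : Prop :=
  forall s, semS C W s -> pi s.
Definition satT (C : CompChain) (W : TgtProg C) (pi : prop (TraceT C)) : Prop :=
  forall t, semT C W t -> pi t.

Definition galois_connection {A B : Type}
  (tau : prop A -> prop B) (sigma : prop B -> prop A) : Prop :=
  forall (pA : prop A) (pB : prop B), subsetP (tau pA) pB <-> subsetP pA (sigma pB).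

Definition TP_tau (C : CompChain) (tau : prop (TraceS C) -> prop (TraceT C)) : Prop :=
  forall (piS : prop (TraceS C)) (W : SrcProg C),
    satS C W piS -> satT C (compile C W) (tau piS).

Definition TP_sigma (C : CompChain) (sigma : prop (TraceT C) -> prop (TraceS C)) : Prop :=
  forall (piT : prop (TraceT C)) (W : SrcProg C),
    satS C W (sigma piT) -> satT C (compile C W) piT.

Definition CC_rel (C : CompChain) (rel : TraceS C -> TraceT C -> Prop) : Prop :=
  forall (W : SrcProg C) (t : TraceT C),
    semT C (compile C W) t -> exists s, rel s t /\ semS C W s.

(* A lower adjoint preserves unions, so [tau] is determined by its values on
   singletons, which [~] prescribes: [tau] is the existential image of [~],
   and by adjunction [sigma] is its universal image.  With these descriptions
   both preservation properties collapse to [CC]: instantiating [TP^tau] with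
   the strongest property of [W] (its own set of traces), or [TP^sigma] with
   the existential image of that set, yields [CC] for [W]; conversely a trace
   of [W] related to a target trace witnesses membership in either image. *)


Definition exists_image {A B : Type} (rel : A -> B -> Prop) (p : prop A) : prop B :=
  fun t => exists s, rel s t /\ p s.

Definition forall_image {A B : Type} (rel : A -> B -> Prop) (q : prop B) : prop A :=
  fun s => forall t, rel s t -> q t.

Section GaloisConnection.

Variables (A B : Type) (tau : prop A -> prop B) (sigma : prop B -> prop A).
Hypothesis gc : galois_connection tau sigma.

Lemma gc_unit (p : prop A) : subsetP p (sigma (tau p)).
Proof. apply gc. intros t Ht. exact Ht. Qed.

Lemma gc_lower_monotone (p q : prop A) : subsetP p q -> subsetP (tau p) (tau q).
Proof. intros Hpq. apply gc. intros s Hs. apply gc_unit, Hpq, Hs. Qed.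

Lemma gc_upper_singleton (q : prop B) (s : A) :
  sigma q s <-> subsetP (tau (singleton s)) q.
Proof.
  split.
  - intros Hs. apply gc. intros x Hx. rewrite Hx. exact Hs.
  - intros Hsub. apply (proj1 (gc _ _) Hsub). reflexivity.
Qed.

Lemma gc_lower_union_singletons (p : prop A) (t : B) :
  tau p t <-> exists s, p s /\ tau (singleton s) t.
Proof.
  split.
  - intros Ht.
    assert (Hub : subsetP (tau p) (fun t => exists s, p s /\ tau (singleton s) t)).
    { apply gc. intros s Hs. apply gc_upper_singleton. intros u Hu. exists s. auto. }
    exact (Hub t Ht).
  - intros [s [Hs Hst]]. apply (gc_lower_monotone (singleton s) p); [|exact Hst].
    intros x Hx. rewrite Hx. exact Hs.
Qed.

Variable rel : A -> B -> Prop.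
Hypothesis rel_tau_singleton : forall s t, rel s t <-> tau (singleton s) t.

Lemma gc_lower_exists_image (p : prop A) (t : B) : tau p t <-> exists_image rel p t.
Proof.
  split.
  - intros Ht. apply gc_lower_union_singletons in Ht. destruct Ht as [s [Hs Hst]].
    exists s. split; [apply rel_tau_singleton, Hst | exact Hs].
  - intros [s [Hst Hs]]. apply gc_lower_union_singletons.
    exists s. split; [exact Hs | apply rel_tau_singleton, Hst].
Qed.

Lemma gc_upper_forall_image (q : prop B) (s : A) : sigma q s <-> forall_image rel q s.
Proof.
  split.
  - intros Hs t Hst. apply gc_upper_singleton in Hs. apply Hs, rel_tau_singleton, Hst.
  - intros Hs. apply gc_upper_singleton. intros t Hst. apply Hs, rel_tau_singleton, Hst.
Qed.

End GaloisConnection.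

Section CompilationChain.

Variables (C : CompChain) (rel : TraceS C -> TraceT C -> Prop).

Lemma TP_exists_image_iff_CC (tau : prop (TraceS C) -> prop (TraceT C)) :
  (forall p t, tau p t <-> exists_image rel p t) -> (TP_tau C tau <-> CC_rel C rel).
Proof.
  intros Htau. split.
  - intros Htp W t Ht. apply Htau. exact (Htp (semS C W) W (fun s Hs => Hs) t Ht).
  - intros Hcc piS W HW t Ht. apply Htau.
    destruct (Hcc W t Ht) as [s [Hst Hs]]. exists s. auto.
Qed.

Lemma TP_forall_image_iff_CC (sigma : prop (TraceT C) -> prop (TraceS C)) :
  (forall q s, sigma q s <-> forall_image rel q s) -> (TP_sigma C sigma <-> CC_rel C rel).
Proof.
  intros Hsigma. split.
  - intros Htp W t Ht. apply (Htp (exists_image rel (semS C W)) W); [|exact Ht].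
    intros s Hs. apply Hsigma. intros u Hsu. exists s. auto.
  - intros Hcc piT W HW t Ht.
    destruct (Hcc W t Ht) as [s [Hst Hs]]. exact (proj1 (Hsigma _ _) (HW s Hs) t Hst).
Qed.

End CompilationChain.

Theorem theorem2p8 (C : CompChain)
  (rel : TraceS C -> TraceT C -> Prop)
  (tau : prop (TraceS C) -> prop (TraceT C))
  (sigma : prop (TraceT C) -> prop (TraceS C))
  (Hgc : galois_connection tau sigma)
  (Hcorr : forall s t, rel s t <-> tau (singleton s) t) :
  (TP_tau C tau <-> CC_rel C rel) /\ (CC_rel C rel <-> TP_sigma C sigma).
Proof.
  split.
  - apply TP_exists_image_iff_CC. exact (gc_lower_exists_image _ _ _ _ Hgc rel Hcorr).
  - apply iff_sym, TP_forall_image_iff_CC.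
    exact (gc_upper_forall_image _ _ _ _ Hgc rel Hcorr).
Qed.
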